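(* Let $\hbar>0$ and, on the Schwartz space $\mathcal{S}(\mathbb{R}^3)$, let $\widehat{x}_j$ be multiplication by $x_j$ and $\widehat{p}_j=-i\hbar\,\partial_{x_j}$ for $j=1,2,3$ (so $[\widehat{x}_j,\widehat{p}_k]=i\hbar\,\delta_{jk}$ and all other pairs commute). Consider the classical angular momentum $l=(l_1,l_2,l_3)=(x_2p_3-x_3p_2,\;x_3p_1-x_1p_3,\;x_1p_2-x_2p_1)$ and the polynomial $l^2=l_1^2+l_2^2+l_3^2$ in $(x,p)\in\mathbb{R}^3\times\mathbb{R}^3$. Let $\widehat{l}=(\widehat{x}_2\widehat{p}_3-\widehat{x}_3\widehat{p}_2,\;\widehat{x}_3\widehat{p}_1-\widehat{x}_1\widehat{p}_3,\;\widehat{x}_1\widehat{p}_2-\widehat{x}_2\widehat{p}_1)$ and $\widehat{l}^{\,2}=\widehat{l}_1^{\,2}+\widehat{l}_2^{\,2}+\widehat{l}_3^{\,2}$. Then the Born--Jordan quantization of $l^2$ satisfies $$\mathrm{Op}_{\mathrm{BJ}}(l^2)=\widehat{l}^{\,2}+2\hbar^2 .$$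
   Context: Shubin $\tau$-ordering: for a real parameter $\tau$ and non-negative integers $m,n$, in one variable $\mathrm{Op}_\tau(x^m p^n)=\sum_{k=0}^{n}\binom{n}{k}\tau^{n-k}(1-\tau)^k\,\widehat{p}^{\,k}\widehat{x}^{\,m}\widehat{p}^{\,n-k}$. For a monomial in several variables $x^\alpha p^\beta=\prod_{j} x_j^{\alpha_j}p_j^{\beta_j}$, $\mathrm{Op}_\tau(x^\alpha p^\beta)=\prod_j \mathrm{Op}_\tau(x_j^{\alpha_j}p_j^{\beta_j})$ (the factors for different indices $j$ commute), extended linearly to polynomials. The Born--Jordan quantization is $\mathrm{Op}_{\mathrm{BJ}}(a)=\int_0^1 \mathrm{Op}_\tau(a)\,d\tau$ for polynomials $a(x,p)$; in one variable this gives $\mathrm{Op}_{\mathrm{BJ}}(x^m p^n)=\frac{1}{m+1}\sum_{k=0}^m \widehat{x}^{\,m-k}\widehat{p}^{\,n}\widehat{x}^{\,k}$. Here $l^2$ is regarded as the expanded polynomial, e.g. $l_3^2=x_1^2p_2^2+x_2^2p_1^2-2x_1p_1x_2p_2$. *)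

From HB Require Import structures.
From mathcomp Require Import all_boot all_order all_algebra.
From mathcomp Require Import all_classical all_reals all_analysis.
From mathcomp Require Import complex.
Set Implicit Arguments. Unset Strict Implicit. Unset Printing Implicit Defensive.
Import Order.TTheory GRing.Theory Num.Theory.
Local Open Scope ring_scope.
Local Open Scope complex_scope.

(* A monomial x^alpha p^beta in (x,p) in R^3 x R^3: exponents (alpha, beta). *)
Definition mono := (('I_3 -> nat) * ('I_3 -> nat))%type.

Definition mono_mul (m1 m2 : mono) : mono :=
  (fun j => m1.1 j + m2.1 j, fun j => m1.2 j + m2.2 j)%N.

(* A real polynomial a(x,p) given as a finite formal sum of terms coef * monomial.
   All maps below are linear in the terms, so they are well defined on polynomials. *)
Definition cpoly (R : realType) := seq (R * mono).

Definition cpoly_add (R : realType) (a b : cpoly R) : cpoly R := a ++ b.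
Definition cpoly_scale (R : realType) (c : R) (a : cpoly R) : cpoly R :=
  [seq (c * t.1, t.2) | t <- a].
Definition cpoly_sub (R : realType) (a b : cpoly R) : cpoly R :=
  cpoly_add a (cpoly_scale (-1) b).
Definition cpoly_mul (R : realType) (a b : cpoly R) : cpoly R :=
  [seq (s.1 * t.1, mono_mul s.2 t.2) | s <- a, t <- b].

Definition delta_exp (j : 'I_3) : 'I_3 -> nat := fun i => if i == j then 1%N else 0%N.
Definition zero_exp : 'I_3 -> nat := fun _ => 0%N.

Definition cx (R : realType) (j : 'I_3) : cpoly R := [:: (1, (delta_exp j, zero_exp))].
Definition cp (R : realType) (j : 'I_3) : cpoly R := [:: (1, (zero_exp, delta_exp j))].

Definition i0 : 'I_3 := @Ordinal 3 0 isT.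
Definition i1 : 'I_3 := @Ordinal 3 1 isT.
Definition i2 : 'I_3 := @Ordinal 3 2 isT.

(* classical angular momentum l = x /\ p  (indices 0,1,2 stand for 1,2,3) *)
Definition cl1 (R : realType) : cpoly R :=
  cpoly_sub (cpoly_mul (cx R i1) (cp R i2)) (cpoly_mul (cx R i2) (cp R i1)).
Definition cl2 (R : realType) : cpoly R :=
  cpoly_sub (cpoly_mul (cx R i2) (cp R i0)) (cpoly_mul (cx R i0) (cp R i2)).
Definition cl3 (R : realType) : cpoly R :=
  cpoly_sub (cpoly_mul (cx R i0) (cp R i1)) (cpoly_mul (cx R i1) (cp R i0)).

Definition cl_sq (R : realType) : cpoly R :=
  cpoly_add (cpoly_mul (cl1 R) (cl1 R))
    (cpoly_add (cpoly_mul (cl2 R) (cl2 R)) (cpoly_mul (cl3 R) (cl3 R))).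

(* Shubin tau-quantization, with tau kept as the polynomial variable 'X of {poly A}:
   Op_tau(x_j^m p_j^n) = sum_k C(n,k) tau^(n-k) (1-tau)^k  P_j^k X_j^m P_j^(n-k). *)
Definition Optau1 (R : realType) (A : algType R[i]) (X P : 'I_3 -> A)
    (j : 'I_3) (m n : nat) : {poly A} :=
  \sum_(k < n.+1) ((('C(n, k))%:R : {poly A}) * 'X ^+ (n - k) * (1 - 'X) ^+ k
                   * (P j ^+ k * X j ^+ m * P j ^+ (n - k))%:P).

Definition Optau_mono (R : realType) (A : algType R[i]) (X P : 'I_3 -> A)
    (m : mono) : {poly A} :=
  \prod_(j < 3) Optau1 X P j (m.1 j) (m.2 j).

Definition Optau (R : realType) (A : algType R[i]) (X P : 'I_3 -> A)
    (a : cpoly R) : {poly A} :=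
  \sum_(t <- a) (((t.1%:C)%:A)%:P * Optau_mono X P t.2).

(* Born--Jordan: integrate the tau-polynomial over [0,1] (Lebesgue integral). *)
Definition tau_moment (R : realType) (n : nat) : R :=
  Rintegral (@lebesgue_measure R) `[0, 1]%classic (fun t : R => t ^+ n).

Definition OpBJ (R : realType) (A : algType R[i]) (X P : 'I_3 -> A)
    (a : cpoly R) : A :=
  let q := Optau X P a in \sum_(n < size q) ((tau_moment R n)%:C *: q`_n).

Definition qlvec (R : realType) (A : algType R[i]) (X P : 'I_3 -> A) (j : 'I_3) : A :=
  if j == i0 then X i1 * P i2 - X i2 * P i1
  else if j == i1 then X i2 * P i0 - X i0 * P i2
  else X i0 * P i1 - X i1 * P i0.

Definition ql_sq (R : realType) (A : algType R[i]) (X P : 'I_3 -> A) : A :=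
  qlvec X P i0 ^+ 2 + qlvec X P i1 ^+ 2 + qlvec X P i2 ^+ 2.

From HB Require Import structures.
From mathcomp Require Import all_boot all_order all_algebra.
From mathcomp Require Import all_classical all_reals all_analysis.
From mathcomp Require Import complex unstable ring.
Set Implicit Arguments.
Unset Strict Implicit.
Unset Printing Implicit Defensive.

Import Order.TTheory GRing.Theory Num.Theory.
Local Open Scope ring_scope.
Local Open Scope complex_scope.

(* Op_tau acts coordinatewise, so each planar component l_ab = x_a p_b - x_b p_a
   of l can be treated on its own.  In l_ab^2 = x_a^2 p_b^2 + x_b^2 p_a^2
   - 2 x_a p_a x_b p_b the first two monomials carry no ordering ambiguity, while
   Op_tau(x_a p_a) = P_a X_a + tau c with c = [X_a, P_a] = i hbar; hence the cross
   monomial quantizes to (P_a X_a + tau c)(P_b X_b + tau c), whose average over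
   tau in [0, 1] is P_a X_a P_b X_b + c/2 (P_a X_a + P_b X_b) + c^2/3.  Bringing
   (X_a P_b - X_b P_a)^2 into the same order gives the same terms up to the
   constant, so each of the three components contributes -2c^2/3 = 2 hbar^2/3. *)

Lemma tau_momentE (R : realType) n : tau_moment R n = n.+1%:R^-1.
Proof.
(* reduce to the library integral of (1 - x)^n by the substitution x -> 1 - x *)
rewrite /tau_moment; under eq_Rintegral do rewrite -XMonemXn0.
rewrite Rintegration_by_substitution_onem ?lexx ?ler01 //; last first.
  exact: within_continuous_XMonemX.
rewrite onem1 -Rintegral_onemXn; apply: eq_Rintegral => x _.
by rewrite XMonemXC XMonemX0n.
Qed.

Definition cl_comp (R : realType) (a b : 'I_3) : cpoly R :=
  cpoly_sub (cpoly_mul (cx R a) (cp R b)) (cpoly_mul (cx R b) (cp R a)).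

Section BornJordanFunctional.
Variables (R : realType) (A : algType R[i]).

Definition born_jordan (q : {poly A}) : A :=
  \sum_(n < size q) ((tau_moment R n)%:C *: q`_n).

Lemma born_jordan_widen {N} {q : {poly A}} : (size q <= N)%N ->
  born_jordan q = \sum_(n < N) ((tau_moment R n)%:C *: q`_n).
Proof.
move=> sqN; rewrite /born_jordan (big_ord_widen N (fun n => (tau_moment R n)%:C *: q`_n) sqN).
rewrite big_mkcond; apply: eq_bigr => n _.
by case: ltnP => // /(nth_default 0) ->; rewrite scaler0.
Qed.

Lemma born_jordan0 : born_jordan 0 = 0.
Proof. by rewrite /born_jordan size_poly0 big_ord0. Qed.

Lemma born_jordanD (p q : {poly A}) : born_jordan (p + q) = born_jordan p + born_jordan q.
Proof.
rewrite (born_jordan_widen (size_polyD p q)) (born_jordan_widen (leq_maxl (size p) (size q))).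
rewrite (born_jordan_widen (leq_maxr (size p) (size q))) -big_split.
by apply: eq_bigr => n _; rewrite coefD scalerDr.
Qed.

Lemma born_jordanCM (k : A) (q : {poly A}) : born_jordan (k%:P * q) = k * born_jordan q.
Proof.
have /born_jordan_widen -> : (size (k%:P * q)%R <= size q)%N.
  by rewrite mul_polyC size_scale_leq.
by rewrite mulr_sumr; apply: eq_bigr => n _; rewrite coefCM scalerAr.
Qed.

Lemma born_jordan_XnC n (k : A) : born_jordan ('X^n * k%:P) = (n.+1%:R^-1)%:C *: k.
Proof.
have /born_jordan_widen -> : (size ('X^n * k%:P)%R <= n.+1)%N.
  by rewrite -commr_polyXn mul_polyC (leq_trans (size_scale_leq _ _)) ?size_polyXn.
rewrite big_ord_recr big1 /= ?add0r => [|i _]; rewrite coefXnM.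
  by rewrite ltnn subnn coefC tau_momentE.
by rewrite ltn_ord scaler0.
Qed.

Lemma born_jordanC (k : A) : born_jordan k%:P = k.
Proof. by rewrite -[k%:P]mul1r -(expr0 'X) born_jordan_XnC invr1 scale1r. Qed.

Lemma born_jordan_affine_mul (u v w z : A) :
  born_jordan ((u%:P + 'X * v%:P) * (w%:P + 'X * z%:P)) =
  u * w + (2^-1)%:C *: (u * z + v * w) + (3^-1)%:C *: (v * z).
Proof.
have expand : (u%:P + 'X * v%:P) * (w%:P + 'X * z%:P) =
    (u * w)%:P + ('X^1 * (u * z + v * w)%:P + 'X^2 * (v * z)%:P).
  rewrite mulrDl !mulrDr polyCD mulrDr !mulrA (commr_polyX u%:P).
  by rewrite -(mulrA 'X v%:P 'X) (commr_polyX v%:P) mulrA -expr2 expr1 -!mulrA -!polyCM !addrA.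
by rewrite expand !born_jordanD born_jordanC !born_jordan_XnC addrA.
Qed.

End BornJordanFunctional.

Section TauQuantization.
Variables (R : realType) (A : algType R[i]) (X P : 'I_3 -> A).

Lemma OpBJE (a : cpoly R) : OpBJ X P a = born_jordan (Optau X P a).
Proof. by []. Qed.

Lemma OpBJ_nil : OpBJ X P [::] = 0.
Proof. by rewrite OpBJE /Optau big_nil born_jordan0. Qed.

Lemma OpBJ_cons r m (a : cpoly R) :
  OpBJ X P ((r, m) :: a) = (r%:C)%:A * born_jordan (Optau_mono X P m) + OpBJ X P a.
Proof. by rewrite !OpBJE /Optau big_cons born_jordanD born_jordanCM. Qed.

Lemma OpBJ_add (a b : cpoly R) : OpBJ X P (cpoly_add a b) = OpBJ X P a + OpBJ X P b.
Proof. by rewrite !OpBJE /Optau /cpoly_add big_cat born_jordanD. Qed.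

Lemma Optau1_n0 j m : Optau1 X P j m 0 = (X j ^+ m)%:P.
Proof. by rewrite /Optau1 big_ord1 subn0 bin0 !expr0 !mulr1 !mul1r. Qed.

Lemma Optau1_0n j n : Optau1 X P j 0 n = (P j ^+ n)%:P.
Proof.
have binomial_one : \sum_(k < n.+1) ('C(n, k)%:R * 'X ^+ (n - k) * (1 - 'X) ^+ k) = 1 :> {poly A}.
  transitivity (('X + (1 - 'X)) ^+ n : {poly A}); last by rewrite subrKC expr1n.
  rewrite exprDn_comm; last exact/commr_sym/commr_polyX.
  by apply: eq_bigr => k _; rewrite -mulrA mulr_natl.
rewrite /Optau1 -[RHS]mul1r -[in RHS]binomial_one mulr_suml; apply: eq_bigr => k _.
by rewrite expr0 mulr1 -exprD subnKC // -ltnS.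
Qed.

Lemma Optau1_11 j :
  Optau1 X P j 1 1 = (P j * X j)%:P + 'X * (X j * P j - P j * X j)%:P.
Proof.
rewrite /Optau1 big_ord_recr big_ord1 /= subn0 subnn bin0 binn !expr0 !expr1 !mulr1 !mul1r.
by rewrite polyCB mulrBr mulrBl mul1r addrCA.
Qed.

End TauQuantization.

Lemma prod_ord3_pair (T : pzSemiRingType) (F : 'I_3 -> T) (a b : 'I_3) :
  a != b -> GRing.comm (F a) (F b) -> (forall j, j != a -> j != b -> F j = 1) ->
  \prod_(j < 3) F j = F a * F b.
Proof.
move=> neq_ab Fab F1.
have -> : \prod_(j < 3) F j = F i0 * F i1 * F i2.
  by rewrite !big_ord_recl big_ord0 mulr1 mulrA; congr (F _ * F _ * F _); apply: val_inj.
have ord3 j : [\/ j = i0, j = i1 | j = i2].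
  by case: j => -[|[|[|//]]] ?; [constructor 1|constructor 2|constructor 3]; apply: val_inj.
case: (ord3 a) (ord3 b) => -> [] -> // in neq_ab Fab F1 *;
  do [rewrite (F1 i0 isT isT) | rewrite (F1 i1 isT isT) | rewrite (F1 i2 isT isT)];
  by rewrite ?mulr1 ?mul1r ?Fab.
Qed.

Section CanonicalCommutation.
Variables (R : realType) (A : algType R[i]) (X P : 'I_3 -> A) (c : R[i]).
Hypothesis XP_commutator :
  forall j k, X j * P k - P k * X j = (if j == k then c%:A else 0).
Hypothesis XX_comm : forall j k, X j * X k = X k * X j.
Hypothesis PP_comm : forall j k, P j * P k = P k * P j.

Lemma XP_comm (j k : 'I_3) : j != k -> GRing.comm (X j) (P k).
Proof. by move/negbTE=> njk; apply/eqP; rewrite -subr_eq0 XP_commutator njk. Qed.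

Lemma XP_swap (j : 'I_3) : X j * P j = P j * X j + c%:A.
Proof. by have := XP_commutator j j; rewrite eqxx => <-; rewrite subrKC. Qed.

Lemma Optau1_comm (a b : 'I_3) m n m' n' :
  a != b -> GRing.comm (Optau1 X P a m n) (Optau1 X P b m' n').
Proof.
move=> neq_ab; have neq_ba : b != a by rewrite eq_sym.
have coord_comm j y : GRing.comm (X j) y -> GRing.comm (P j) y ->
    forall k l r, GRing.comm (P j ^+ k * X j ^+ l * P j ^+ r) y.
  by move=> cXy cPy k l r; apply/commr_sym/commrM; [apply/commrM|]; exact/commrX/commr_sym.
have scalar_comm l k (q : {poly A}) : GRing.comm ('C(l, k)%:R * 'X^(l - k) * (1 - 'X) ^+ k) q.
  apply/commr_sym/commrM; first exact/commrM/commr_polyXn/commr_nat.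
  exact/commrX/commrB/commr_polyX/commr1.
apply: commr_sum => k' _; apply/commr_sym/commr_sum => k _.
apply/commrM; first exact/commr_sym/scalar_comm.
apply/commr_sym/commrM; first exact/commr_sym/scalar_comm.
rewrite /GRing.comm -!polyCM; congr _%:P; apply/commr_sym/coord_comm.
  by apply/commr_sym/coord_comm; [exact: XX_comm | exact/commr_sym/XP_comm].
by apply/commr_sym/coord_comm; [exact: XP_comm | exact: PP_comm].
Qed.

Lemma Optau_mono_pair (a b : 'I_3) (m : mono) : a != b ->
  (forall j, j != a -> j != b -> m.1 j = 0 /\ m.2 j = 0)%N ->
  Optau_mono X P m = Optau1 X P a (m.1 a) (m.2 a) * Optau1 X P b (m.1 b) (m.2 b).
Proof.
move=> neq_ab m0; apply: prod_ord3_pair => // [|j ja jb]; first exact: Optau1_comm.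
by case: (m0 j ja jb) => -> ->; rewrite Optau1_0n expr0.
Qed.

Definition ql_comp (a b : 'I_3) : A := X a * P b - X b * P a.

Lemma ql_comp_sq (a b : 'I_3) : a != b ->
  ql_comp a b ^+ 2 = X a ^+ 2 * P b ^+ 2 + P a ^+ 2 * X b ^+ 2
    - (P a * X a * (P b * X b) *+ 2 + c *: (P a * X a + P b * X b)).
Proof.
move=> neq_ab; have neq_ba : b != a by rewrite eq_sym.
have cab := XP_comm neq_ab; have cba := XP_comm neq_ba.
have e1 : X a * P b * (X a * P b) = X a ^+ 2 * P b ^+ 2.
  by rewrite mulrA -(mulrA (X a)) -cab mulrA -expr2 -mulrA -expr2.
have e2 : X b * P a * (X b * P a) = P a ^+ 2 * X b ^+ 2.
  by rewrite mulrA -(mulrA (X b)) -cba mulrA -expr2 -mulrA -expr2; exact/commrX/commr_sym/commrX.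
have e3 : X a * P b * (X b * P a) = (P a * X a + c%:A) * (P b * X b).
  by rewrite cba mulrA -(mulrA (X a)) (PP_comm b a) mulrA -mulrA XP_swap.
have e4 : X b * P a * (X a * P b) = P a * X a * (P b * X b + c%:A).
  have Xb_PaXa : X b * (P a * X a) = P a * X a * X b.
    by rewrite mulrA cba -mulrA (XX_comm b a) mulrA.
  by rewrite -mulrA (mulrA (P a)) mulrA Xb_PaXa -mulrA XP_swap.
rewrite /ql_comp expr2 mulrBl !mulrBr e1 e2 e3 e4 mulrDl mulrDr mulr_algl mulr_algr.
by rewrite scalerDr mulr2n opprB addrACA -opprD addrACA (addrC (c *: (P b * X b))).
Qed.

Lemma born_jordan_cross (a b : 'I_3) :
  born_jordan (Optau1 X P a 1 1 * Optau1 X P b 1 1) *+ 2 =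
  P a * X a * (P b * X b) *+ 2 + c *: (P a * X a + P b * X b)
    + ((3^-1)%:C * c ^+ 2)%:A *+ 2.
Proof.
have half : (2^-1)%:C *+ 2 = 1 :> R[i].
  by rewrite -rmorphMn mulr2n -(mul1r (2^-1)) -splitr rmorph1.
rewrite !Optau1_11 !XP_commutator !eqxx born_jordan_affine_mul !mulrnDl.
congr (_ + _ + _); last by rewrite mulr_algl !scalerA -mulrA -expr2.
by rewrite scalerMnl half scale1r mulr_algr mulr_algl scalerDr.
Qed.

Lemma OpBJ_cl_comp_sq (a b : 'I_3) : a != b ->
  OpBJ X P (cpoly_mul (cl_comp R a b) (cl_comp R a b)) =
  ql_comp a b ^+ 2 - ((3^-1)%:C * c ^+ 2)%:A *+ 2.
Proof.
move=> neq_ab; have neq_ba : b != a by rewrite eq_sym.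
rewrite /cl_comp /cpoly_sub /cpoly_add /cpoly_scale /cpoly_mul /cx /cp /=.
rewrite !OpBJ_cons OpBJ_nil addr0 !(Optau_mono_pair neq_ab) /=.
(* the four monomials only involve the coordinates a and b *)
2-5: by move=> j ja jb; rewrite /delta_exp (negbTE ja) (negbTE jb).
rewrite /delta_exp /zero_exp !eqxx (negbTE neq_ab) (negbTE neq_ba) !addn0 !add0n !addn1.
rewrite !mul1r !mulr1 mulrNN mulr1 !rmorphN !rmorph1 scaleN1r scale1r !mul1r !mulN1r.
rewrite !Optau1_n0 !Optau1_0n -!polyCM !born_jordanC ql_comp_sq //.
set Y := born_jordan _.
rewrite (addrC (- Y) (P a ^+ 2 * _)) (addrCA (- Y)) !addrA -addrA -opprD -mulr2n.
by rewrite born_jordan_cross opprD addrA.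
Qed.
End CanonicalCommutation.

Theorem mainTheorem1 (R : realType) (A : algType R[i]) (hbar : R) (X P : 'I_3 -> A) :
  0 < hbar ->
  (forall j k : 'I_3, X j * P k - P k * X j = (if j == k then ('i * hbar%:C)%:A else 0)) ->
  (forall j k : 'I_3, X j * X k = X k * X j) ->
  (forall j k : 'I_3, P j * P k = P k * P j) ->
  OpBJ X P (cl_sq R) = ql_sq X P + ((2 * hbar ^+ 2)%:C)%:A.
Proof.
move=> _ XP_commutator XX_comm PP_comm.
have ql_sqE : ql_sq X P =
    ql_comp X P i1 i2 ^+ 2 + ql_comp X P i2 i0 ^+ 2 + ql_comp X P i0 i1 ^+ 2 by [].
rewrite /cl_sq -[cl1 R]/(cl_comp R i1 i2) -[cl2 R]/(cl_comp R i2 i0) -[cl3 R]/(cl_comp R i0 i1).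
rewrite !OpBJ_add !(OpBJ_cl_comp_sq XP_commutator XX_comm PP_comm) // ql_sqE.
set k := ((3^-1)%:C * _)%:A.
have k6 : k *+ 6 = - ((2 * hbar ^+ 2)%:C)%:A.
  rewrite /k scalerMnl -scaleNr; congr (_ *: 1).
  by rewrite exprMn sqr_i; field.
rewrite -[_%:A in RHS]opprK -k6 (mulrnA k 2 3); set k2 := k *+ 2.
by rewrite -[k2 *+ 3]/(k2 + (k2 + k2)) (addrACA (ql_comp X P i2 i0 ^+ 2)) -opprD addrACA -!opprD addrA.
Qed.
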